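(* Let $\alpha\in\mathbb{Z}_{\ge 0}$ and let $I$ be a finitely generated graded right $A$-submodule of $Q_{\mathrm{gr}}(A)$ with structure constants $\{c_i\}$. Then for each $n\in\mathbb{Z}$: (1) there is a surjection $I\to X\langle n\rangle$ in $\operatorname{gr}A$ iff $c_{n-\alpha}\in\{1,\sigma^{n-\alpha}(z)\}$; (2) there is a surjection $I\to Y\langle n\rangle$ iff $c_n\in\{\sigma^n(z),\sigma^n(f)\}$; (3) if $\alpha>0$, there is a surjection $I\to Z\langle n\rangle$ iff $c_{n-\alpha}\in\{\sigma^{n-\alpha}(z+\alpha),\sigma^{n-\alpha}(f)\}$ and $c_n\in\{1,\sigma^n(z+\alpha)\}$.
   Context: $\Bbbk$ algebraically closed of characteristic $0$; $\sigma(z)=z+1$. $f=z(z+\alpha)$, $A=A(f)$ generated by $\Bbbk[z],x,y$ with $xz=(z+1)x$, $yz=(z-1)y$, $xy=f$, $yx=\sigma^{-1}(f)$, graded by $\deg x=1,\deg y=-1,\deg z=0$; $\operatorname{gr}A$ finitely generated graded right modules with degree-$0$ maps; $M\langle i\rangle_j=M_{j-i}$. If $\alpha=0$: $X=A/(xA+zA)$; if $\alpha>0$: $X=(A/(xA+(z+\alpha)A))\langle-\alpha\rangle$ and $Z=A/(y^\alpha A+xA+zA)$; in both cases $Y=(A/(yA+(z-1)A))\langle1\rangle$. $Q_{\mathrm{gr}}(A)=\Bbbk(z)[x,x^{-1};\sigma]$ is the graded quotient ring. A finitely generated graded right submodule $I\subseteq Q_{\mathrm{gr}}(A)$ has the form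 $\bigoplus_i\Bbbk[z]a_ix^i$ ($a_i\in\Bbbk(z)^\times$), and its structure constants are $c_i=a_ia_{i+1}^{-1}$ normalized monic; each $c_i\in\{1,\sigma^i(z),\sigma^i(z+\alpha),\sigma^i(f)\}$. *)

From HB Require Import structures.
From Stdlib Require Lists.List.
From mathcomp Require Import all_boot all_order all_algebra.
Set Implicit Arguments. Unset Strict Implicit. Unset Printing Implicit Defensive.
Import Order.TTheory GRing.Theory Num.Theory.
Local Open Scope ring_scope.

Notation "x %:F" := (@FracField.tofrac _ x) : ring_scope.

Section Defs.
Variable K : fieldType.

Definition sigp (i : int) (p : {poly K}) : {poly K} := p \Po ('X + (i%:~R)%:P).

Definition fpoly (al : nat) : {poly K} := 'X * ('X + (al%:R)%:P).

(* A = A(f) is presented by generators z, x, y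
   (k[z] is free on z) with the relations of the paper, so a graded right
   A-module is a family of k-vector spaces M_i (i : int) with k-linear maps
     .z : M_i -> M_i,  .x : M_i -> M_(i+1),  .y : M_(i+1) -> M_i
   satisfying the relations (see grmod_axioms).  To avoid dependent casts,
   .x and .y are given as families gx i j, gy i j : M_i -> M_j which are only
   ever used for j = i + 1 (resp. i = j + 1). *)
Record grmod := GrMod {
  gcar :> int -> lmodType K;
  gz : forall i, gcar i -> gcar i;
  gx : forall i j, gcar i -> gcar j;
  gy : forall i j, gcar i -> gcar j }.
Arguments gz {g} i _.
Arguments gx {g} i j _.
Arguments gy {g} i j _.

(* The module axioms (documentation: the concrete modules below satisfy them). *)
Definition grmod_axioms (al : nat) (M : grmod) : Prop :=
  forall i : int,
  [/\ (forall (c : K) (u v : M i), gz i (c *: u + v) = c *: gz i u + gz i v)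
      /\ (forall (c : K) (u v : M i), gx i (i + 1) (c *: u + v)
                                  = c *: gx i (i + 1) u + gx i (i + 1) v)
      /\ (forall (c : K) (u v : M (i + 1)), gy (i + 1) i (c *: u + v)
                                  = c *: gy (i + 1) i u + gy (i + 1) i v),
      (* x z = (z + 1) x *)
      forall u : M i, gz (i + 1) (gx i (i + 1) u) = gx i (i + 1) (gz i u + u),
      (* y z = (z - 1) y *)
      forall u : M (i + 1), gz i (gy (i + 1) i u) = gy (i + 1) i (gz (i + 1) u - u),
      (* x y = f = z (z + alpha) *)
      forall u : M i, gy (i + 1) i (gx i (i + 1) u) = gz i (gz i u + al%:R *: u)
    & (* y x = sigma^{-1}(f) = (z - 1)(z - 1 + alpha) *)
      forall u : M (i + 1), gx i (i + 1) (gy (i + 1) i u)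
                      = (let w := gz (i + 1) u - u in gz (i + 1) w + al%:R *: w)].

Definition grhom (M N : grmod) (phi : forall i, M i -> N i) : Prop :=
  [/\ forall i (c : K) (u v : M i), phi i (c *: u + v) = c *: phi i u + phi i v,
      forall i (u : M i), phi i (gz i u) = gz i (phi i u),
      forall i (u : M i), phi (i + 1) (gx i (i + 1) u) = gx i (i + 1) (phi i u)
    & forall i (u : M (i + 1)), phi i (gy (i + 1) i u) = gy (i + 1) i (phi (i + 1) u)].

Definition grsurj (M N : grmod) : Prop :=
  exists phi : forall i, M i -> N i,
    grhom phi /\ forall i (w : N i), exists u : M i, phi i u = w.

Definition shift (M : grmod) (n : int) : grmod :=
  @GrMod (fun j => M (j - n))
         (fun j => @gz M (j - n))
         (fun i j => @gx M (i - n) (j - n))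
         (fun i j => @gy M (i - n) (j - n)).

Definition grsubmod (M : grmod) (S : forall i, M i -> Prop) : Prop :=
  forall i,
  [/\ S i 0,
      forall (c : K) (u v : M i), S i u -> S i v -> S i (c *: u + v),
      forall u, S i u -> S i (gz i u),
      forall u, S i u -> S (i + 1) (gx i (i + 1) u)
    & forall u, S (i + 1) u -> S i (gy (i + 1) i u)].

Definition fingen (M : grmod) : Prop :=
  exists gens : seq {i : int & M i},
    forall S, grsubmod S ->
      (forall g, Stdlib.Lists.List.In g gens -> S (projT1 g) (projT2 g)) ->
      forall i (u : M i), S i u.

(* Modules concentrated in degrees { j | b j }, one-dimensional there,
   with basis vector e_j: e_j.z = j e_j, e_j.x = xc j e_(j+1),
   e_j.y = yc j e_(j-1)  (e_j = 0 outside the support). *)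
Definition tr (m n : nat) (v : 'rV[K]_m) : 'rV[K]_n :=
  v *m (const_mx 1 : 'M[K]_(m, n)).
Arguments tr {m n} v.

Definition strmod (b : int -> bool) (xc yc : int -> K) : grmod :=
  @GrMod (fun j => 'rV[K]_(b j : nat))
         (fun i v => i%:~R *: v)
         (fun i j v => if j == i + 1 then xc i *: tr v else 0)
         (fun i j v => if j == i - 1 then yc i *: tr v else 0).

(* X := A/(xA+zA) (alpha = 0), X := (A/(xA+(z+alpha)A))<-alpha> (alpha > 0):
   k-basis e_j = class of y^m in degree j = -alpha - m (m >= 0);
   y^m z = (z-m) y^m == j y^m, y^m y = y^(m+1), y^m x = sigma^{-m}(f) y^(m-1)
   == f(j) y^(m-1).  Both cases are given by one formula. *)
Definition Xmod (al : nat) : grmod :=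
  strmod (fun j => j <= - (al%:Z)) (fun j => (fpoly al).[j%:~R]) (fun _ => 1).

(* Y := (A/(yA+(z-1)A))<1>: basis class of x^m in degree j = m + 1 (m >= 0);
   x^m z == j x^m, x^m x = x^(m+1), x^m y = sigma^(m-1)(f) x^(m-1)
   == f(j-1) x^(m-1). *)
Definition Ymod (al : nat) : grmod :=
  strmod (fun j => 1 <= j) (fun _ => 1) (fun j => (fpoly al).[(j - 1)%:~R]).

(* Z := A/(y^alpha A + xA + zA) (alpha > 0): basis class of y^m, 0 <= m < alpha,
   in degree j = -m; y^m z == j y^m, y^m y = y^(m+1) (0 if m+1 = alpha),
   y^m x == f(j) y^(m-1). *)
Definition Zmod (al : nat) : grmod :=
  strmod (fun j => (- (al%:Z) < j) && (j <= 0))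
         (fun j => (fpoly al).[j%:~R]) (fun _ => 1).

(* Graded submodules I = (+)_i k[z] a_i x^i of Q_gr(A) = k(z)[x,x^-1;sigma]. *)

(* the polynomial represented by a fraction (meaningful when it is one) *)
Definition polyof (q : {fraction {poly K}}) : {poly K} :=
  (\n_(repr q)) %/ (\d_(repr q)).

(* I is a right A-submodule: a_i nonzero, I.x in I, I.y in I
   (I.z in I is automatic); y = sigma^{-1}(f) x^{-1} in Q_gr(A), so
   a_i x^i . y = a_i sigma^{i-1}(f) x^{i-1}. *)
Definition is_grsubQ (al : nat) (a : int -> {fraction {poly K}}) : Prop :=
  [/\ forall i, a i != 0,
      forall i, exists p : {poly K}, a i = p%:F * a (i + 1)
    & forall i, exists p : {poly K},
        a i * (sigp (i - 1) (fpoly al))%:F = p%:F * a (i - 1)].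

(* The module I, with I_j = k[z] a_j x^j identified with k[z] via p |-> p a_j x^j:
   (p a_j x^j) z = p sigma^j(z) a_j x^j,
   (p a_j x^j) x = (p a_j/a_(j+1)) a_(j+1) x^(j+1),
   (p a_j x^j) y = (p a_j sigma^(j-1)(f)/a_(j-1)) a_(j-1) x^(j-1). *)
Definition Imod (al : nat) (a : int -> {fraction {poly K}}) : grmod :=
  @GrMod (fun _ => {poly K})
    (fun i p => p * sigp i 'X)
    (fun i j p => if j == i + 1 then p * polyof (a i / a (i + 1)) else 0)
    (fun i j p => if j == i - 1 then
                    p * polyof (a i * (sigp (i - 1) (fpoly al))%:F / a (i - 1))
                  else 0).

Definition strc (a : int -> {fraction {poly K}}) (i : int) : {poly K} :=
  let r := polyof (a i / a (i + 1)) in (lead_coef r)^-1 *: r.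

End Defs.

From HB Require Import structures.
From mathcomp Require Import all_boot all_order all_algebra ring zify.

(* A degree-0 map phi : I -> T, for T = X<n>, Y<n> or Z<n>, is evaluation at
   -n: z acts on I_j = k[z] by multiplication by z + j and on the line T_j by
   j - n, so phi_j u = u(-n) phi_j 1.  Writing phi_j 1 = lam_j e_j,
   compatibility with x and y is a first-order recurrence for lam on the
   interval supporting T, whose coefficients are the values at -n of the
   polynomials by which x and y act on I.  Their product
   sigma^j(f) = (z + j)(z + j + alpha) is nonzero at -n inside the support, so
   a nowhere-zero solution exists there, and surjectivity amounts to the
   vanishing at -n of the x-coefficient at the lower end of the support and of
   the y-coefficient at its upper end.  It remains to list the monic divisors
   c_j of (z - r)(z - s) that vanish at r, or whose cofactor does. *)

Set Implicit Arguments. Unset Strict Implicit. Unset Printing Implicit Defensive.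
Import GRing.Theory.
Local Open Scope ring_scope.

Section MonicPart.
Variable K : fieldType.
Implicit Types (p q g : {poly K}) (r s : K).

Definition normp p : {poly K} := (lead_coef p)^-1 *: p.

Lemma normp_monic p : p != 0 -> normp p \is monic.
Proof. by move=> p0; apply/monicP; rewrite lead_coefZ mulVf ?lead_coef_eq0. Qed.

Lemma normp_id p : p \is monic -> normp p = p.
Proof. by move/monicP => lp1; rewrite /normp lp1 invr1 scale1r. Qed.

Lemma normpM p q : normp (p * q) = normp p * normp q.
Proof. by rewrite /normp lead_coefM invfM -scalerAl -scalerAr scalerA mulrC. Qed.

Lemma dvdp_normp p g : (normp p %| g) = (p %| g).
Proof.
have [->|p0] := eqVneq p 0; first by rewrite /normp scaler0.
by rewrite dvdpZl // invr_eq0 lead_coef_eq0.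
Qed.

Lemma dvdp_XsubC p s : p %| 'X - s%:P <-> normp p = 1 \/ normp p = 'X - s%:P.
Proof.
rewrite -dvdp_normp; split=> [dvd_p|[]->]; rewrite ?dvd1p ?dvdpp //.
have p0 : p != 0.
  by apply: contraTneq dvd_p => ->; rewrite /normp scaler0 dvd0p polyXsubC_eq0.
have mp := normp_monic p0.
case/(irredp_XsubCP (irredp_XsubC s)): dvd_p.
  by rewrite eqp_monic ?monic1 // => /eqP; left.
by rewrite eqp_monic ?monicXsubC // => /eqP; right.
Qed.

Lemma root_cofactor p q g r : p * q = ('X - r%:P) * g -> g != 0 ->
  root q r = (p %| g).
Proof.
move=> pq g0; have Xr0 : 'X - r%:P != 0 by rewrite polyXsubC_eq0.
apply/idP/idP.
  rewrite -dvdp_XsubCl => /dvdpP[q' qE]; move: pq.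
  rewrite qE mulrA [_ * g]mulrC => /(mulIf Xr0) <-.
  exact: dvdp_mulIl.
case/dvdpP=> h gE.
have p0 : p != 0 by apply: contraNneq g0 => p0; rewrite gE p0 mulr0.
move: pq; rewrite gE mulrA [p * q]mulrC => /(mulIf p0) ->.
by rewrite /root hornerM hornerXsubC subrr mul0r.
Qed.

Lemma root_cofactor_XsubC2 p q r s : p * q = ('X - r%:P) * ('X - s%:P) ->
  root q r <-> normp p = 1 \/ normp p = 'X - s%:P.
Proof.
by move=> pq; rewrite (root_cofactor pq) ?polyXsubC_eq0 //; apply: dvdp_XsubC.
Qed.

Lemma root_factor_XsubC2 p q r s : p * q = ('X - r%:P) * ('X - s%:P) ->
  root p r <-> normp p = 'X - r%:P \/ normp p = ('X - r%:P) * ('X - s%:P).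
Proof.
move=> pq; have Xr0 : 'X - r%:P != 0 by rewrite polyXsubC_eq0.
have Xs0 : 'X - s%:P != 0 by rewrite polyXsubC_eq0.
have npq : normp p * normp q = ('X - r%:P) * ('X - s%:P).
  by rewrite -normpM pq normp_id // monicMl ?monicXsubC.
rewrite (@root_cofactor_XsubC2 q p r s); last by rewrite mulrC.
split=> -[nq|np]; rewrite ?nq ?np ?mulr1 in npq.
- by right.
- by left; apply: (mulIf Xs0).
- by right; apply: (mulfI Xr0).
- by left; apply: (mulfI (mulf_neq0 Xr0 Xs0)); rewrite npq mulr1.
Qed.

End MonicPart.

Section SigmaShift.
Variables (K : fieldType) (i : int).

Lemma sigp_X : sigp i 'X = 'X - (- i%:~R)%:P :> {poly K}.
Proof. by rewrite /sigp comp_polyX polyCN opprK. Qed.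

Lemma sigp_XaddC (c : K) : sigp i ('X + c%:P) = 'X - (- (i%:~R + c))%:P.
Proof. by rewrite /sigp comp_polyD comp_polyX comp_polyC polyCN opprK polyCD addrA. Qed.

Lemma sigp_fpoly al : sigp i (fpoly K al) = sigp i 'X * sigp i ('X + al%:R%:P).
Proof. by rewrite /sigp comp_polyM. Qed.

End SigmaShift.

Section Recurrences.
Variables (K : fieldType) (g : int -> K) (m : int).

Lemma recurrence_solution_down : exists lam : int -> K,
  (forall j, j < m -> g j != 0 -> lam j * g j = lam (j + 1)) /\
  (forall j, j <= m -> (forall i, j <= i < m -> g i != 0) -> lam j != 0).
Proof.
exists (fun j => (\prod_(k < absz (m - j)%R) g (m - k.+1%:Z))^-1); split.
- move=> j jm gj0; have -> : absz (m - j)%R = (absz (m - (j + 1))%R).+1 by lia.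
  rewrite big_ord_recr /= invfM -mulrA.
  by rewrite (_ : m - ((absz (m - (j + 1))%R).+1)%:Z = j) ?mulVf ?mulr1 //; lia.
- move=> j jm gnz; rewrite invr_eq0; apply/prodf_neq0 => k _.
  by apply: gnz; have := ltn_ord k; lia.
Qed.

Lemma recurrence_solution_up : exists lam : int -> K,
  (forall j, m <= j -> g j != 0 -> lam (j + 1) * g j = lam j) /\
  (forall j, m <= j -> (forall i, m <= i < j -> g i != 0) -> lam j != 0).
Proof.
exists (fun j => (\prod_(k < absz (j - m)%R) g (m + k%:Z))^-1); split.
- move=> j mj gj0; have -> : absz (j + 1 - m)%R = (absz (j - m)%R).+1 by lia.
  rewrite big_ord_recr /= invfM -mulrA.
  by rewrite (_ : m + (absz (j - m)%R)%:Z = j) ?mulVf ?mulr1 //; lia.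
- move=> j mj gnz; rewrite invr_eq0; apply/prodf_neq0 => k _.
  by apply: gnz; have := ltn_ord k; lia.
Qed.

End Recurrences.

Section BoolRows.
Variable K : fieldType.
Local Notation e := (const_mx 1).

Lemma rowb_eq0 (b : bool) (v : 'rV[K]_b) : ~~ b -> v = 0.
Proof. by case: b v => // v _; rewrite thinmx0. Qed.

Lemma rowb_eq (b : bool) (v w : 'rV[K]_b) : ~~ b -> v = w.
Proof. by move=> nb; rewrite (rowb_eq0 v nb) (rowb_eq0 w nb). Qed.

Lemma rowb_const_neq0 (b : bool) : b -> (e : 'rV[K]_b) != 0.
Proof.
case: b => // _.
by apply/eqP => /matrixP /(_ ord0 ord0); rewrite !mxE => /eqP; rewrite oner_eq0.
Qed.

Lemma rowb_span (b : bool) (w : 'rV[K]_b) : exists k, w = k *: e.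
Proof.
case: b w => w; last by exists 0; rewrite scale0r thinmx0.
by exists (w ord0 ord0); apply/matrixP => i k; rewrite !mxE !ord1 mulr1.
Qed.

Lemma trZ m k (c : K) (v : 'rV[K]_m) : tr k (c *: v) = c *: tr k v.
Proof. by rewrite /tr scalemxAl. Qed.

Lemma tr_const (b1 b2 : bool) : tr b2 (e : 'rV[K]_b1) = if b1 then e : 'rV_b2 else 0.
Proof.
case: b1; last by rewrite /tr thinmx0 mul0mx.
by apply/matrixP => i j; rewrite !mxE big_ord1 !mxE mulr1.
Qed.

End BoolRows.

(* Right multiplication by x : I_i -> I_(i+1) and by y : I_(i+1) -> I_i,
   in the identification I_j = k[z] made by Imod. *)
Definition xcoef (K : fieldType) (a : int -> {fraction {poly K}}) (i : int) :
  {poly K} := polyof (a i / a (i + 1)).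

Definition ycoef (K : fieldType) (al : nat) (a : int -> {fraction {poly K}})
  (i : int) : {poly K} :=
  polyof (a (i + 1) * (sigp i (fpoly K al))%:F / a i).

Section LineModules.
Variables (K : fieldType) (al : nat) (a : int -> {fraction {poly K}}).
Variables (b : int -> bool) (xc yc : int -> K) (n : int).
Local Notation I := (Imod al a).
Local Notation T := (shift (strmod b xc yc) n).
Local Notation r := (- n%:~R : K).

Lemma Imod_gx j (u : I j) : gx (j + 1) u = u * xcoef a j.
Proof. by rewrite /= eqxx. Qed.

Lemma Imod_gy j (u : I (j + 1)) : gy j u = u * ycoef al a j.
Proof. by rewrite /= addrK eqxx. Qed.

Lemma line_gx j (v : T j) : gx (j + 1) v = xc (j - n) *: tr (b (j + 1 - n)) v.
Proof. by rewrite /= ifT //; rewrite addrAC. Qed.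

Lemma line_gy j (v : T (j + 1)) :
  gy j v = yc (j + 1 - n) *: tr (b (j - n)) v.
Proof. by rewrite /= ifT //; rewrite addrAC addrK. Qed.

Lemma grhom_Imod_horner (phi : forall i, I i -> T i) : grhom phi ->
  forall j (u : I j), phi j u = u.[r] *: phi j 1.
Proof.
move=> [lin hz _ _] j u.
have phiD u1 u2 : phi j (u1 + u2) = phi j u1 + phi j u2.
  by have := lin j 1 u1 u2; rewrite !scale1r.
have phiZ c u1 : phi j (c *: u1) = c *: phi j u1.
  have phi0 : phi j 0 = 0 by apply: (addIr (phi j 0)); rewrite -phiD !add0r.
  by have := lin j c u1 0; rewrite !addr0 phi0 addr0.
have phi_root v : phi j (v * ('X - r%:P)) = 0.
  have -> : v * ('X - r%:P) = v * sigp j 'X + (n%:~R - j%:~R) *: v.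
    by rewrite /sigp comp_polyX -mul_polyC polyCB polyCN; ring.
  by rewrite phiD phiZ hz /= -scalerDl rmorphB /= addrA subrK subrr scale0r.
have /factor_theorem[s uE] : root (u - (u.[r])%:P) r by rewrite /root !hornerE subrr.
have {1}-> : u = s * ('X - r%:P) + u.[r] *: 1 by rewrite -uE alg_polyC subrK.
by rewrite phiD phi_root add0r phiZ.
Qed.

Lemma surj_line_neq0 (phi : forall i, I i -> T i) : grhom phi ->
  (forall i (w : T i), exists u : I i, phi i u = w) ->
  forall j, b (j - n) -> phi j 1 != 0.
Proof.
move=> hphi hsurj j bj; have [u hu] := hsurj j (const_mx 1).
have := rowb_const_neq0 K bj; rewrite -hu (grhom_Imod_horner hphi).
by apply: contraNneq => ->; rewrite scaler0.
Qed.

Lemma surj_line_top (phi : forall i, I i -> T i) : grhom phi ->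
  (forall i (w : T i), exists u : I i, phi i u = w) ->
  forall j, b (j - n) -> ~~ b (j + 1 - n) -> (ycoef al a j).[r] = 0.
Proof.
move=> hphi hsurj j bj nbj1; have [_ _ _ hy] := hphi.
have := hy j 1; rewrite Imod_gy line_gy (rowb_eq0 (phi (j + 1) 1) nbj1).
rewrite /tr mul0mx scaler0 mul1r (grhom_Imod_horner hphi) => /eqP.
by rewrite scaler_eq0 (negbTE (surj_line_neq0 hphi hsurj bj)) orbF => /eqP.
Qed.

Lemma surj_line_bottom (phi : forall i, I i -> T i) : grhom phi ->
  (forall i (w : T i), exists u : I i, phi i u = w) ->
  forall j, ~~ b (j - n) -> b (j + 1 - n) -> (xcoef a j).[r] = 0.
Proof.
move=> hphi hsurj j nbj bj1; have [_ _ hx _] := hphi.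
have := hx j 1; rewrite Imod_gx line_gx (rowb_eq0 (phi j 1) nbj).
rewrite /tr mul0mx scaler0 mul1r (grhom_Imod_horner hphi) => /eqP.
by rewrite scaler_eq0 (negbTE (surj_line_neq0 hphi hsurj bj1)) orbF => /eqP.
Qed.

Lemma surj_line_of_weights (lam : int -> K) :
  (forall j, b (j + 1 - n) -> lam (j + 1) * (xcoef a j).[r]
     = if b (j - n) then xc (j - n) * lam j else 0) ->
  (forall j, b (j - n) -> lam j * (ycoef al a j).[r]
     = if b (j + 1 - n) then yc (j + 1 - n) * lam (j + 1) else 0) ->
  (forall j, b (j - n) -> lam j != 0) ->
  grsurj I T.
Proof.
move=> hx hy hlam.
exists (fun j (u : I j) => (lam j * u.[r]) *: (const_mx 1 : T j)); split; first split.
- move=> j c u v /=.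
  by rewrite hornerD hornerZ mulrDr scalerDl mulrCA scalerA.
- move=> j u /=; rewrite scalerA /sigp comp_polyX hornerM hornerD hornerX hornerC.
  by congr (_ *: _); rewrite rmorphB /=; ring.
- move=> j u; rewrite Imod_gx line_gx trZ tr_const.
  have /orP[bj1|nbj1] := orbN (b (j + 1 - n)); last exact: rowb_eq.
  move: (hx j bj1); case: (b (j - n)) => hxj;
    rewrite ?scaler0 ?scalerA hornerM mulrCA hxj.
    by congr (_ *: _); ring.
  by rewrite mulr0 scale0r.
- move=> j u; rewrite Imod_gy line_gy trZ tr_const.
  have /orP[bj|nbj] := orbN (b (j - n)); last exact: rowb_eq.
  move: (hy j bj); case: (b (j + 1 - n)) => hyj;
    rewrite ?scaler0 ?scalerA hornerM mulrCA hyj.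
    by congr (_ *: _); ring.
  by rewrite mulr0 scale0r.
- move=> j w; have [k ->] := rowb_span w.
  have /orP[bj|nbj] := orbN (b (j - n)); last by exists 0; apply: rowb_eq.
  by exists (k / lam j)%:P; rewrite hornerC mulrC divfK ?hlam.
Qed.

End LineModules.

Lemma polyof_tofrac (K : fieldType) (p : {poly K}) : polyof p%:F = p.
Proof.
rewrite /polyof; unlock FracField.tofrac.
have := FracField.equivf_l (Ratio p 1).
rewrite !numden_Ratio ?oner_eq0 // mulr1 => ->.
by rewrite mulrC mulpK // denom_ratioP.
Qed.

Lemma pchar0_intr_eq0 (K : fieldType) : [pchar K] =i pred0 ->
  forall t : int, (t%:~R == 0 :> K) = (t == 0).
Proof.
move/pcharf0P => natf_eq0 [] k; first by rewrite natf_eq0.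
by rewrite NegzE rmorphN oppr_eq0 /= natf_eq0.
Qed.

Section StructureConstants.
Variables (K : fieldType) (al : nat) (a : int -> {fraction {poly K}}).
Hypothesis hI : is_grsubQ al a.
Local Notation f := (fpoly K al).

Lemma xcoef_mul_ycoef i : xcoef a i * ycoef al a i = sigp i f.
Proof.
have [a_neq0 xdiv ydiv] := hI; have [p aE] := xdiv i; have [q a'E] := ydiv (i + 1).
rewrite addrK in a'E.
have -> : xcoef a i = p by rewrite /xcoef aE mulfK ?a_neq0 // polyof_tofrac.
have -> : ycoef al a i = q by rewrite /ycoef a'E mulfK ?a_neq0 // polyof_tofrac.
apply/eqP; rewrite -tofrac_eq tofracM; apply/eqP.
apply: (mulIf (a_neq0 (i + 1))).
by rewrite mulrAC -aE mulrC -a'E mulrC.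
Qed.

Lemma horner_xcoef_ycoef i (n : int) :
  (xcoef a i).[- n%:~R] * (ycoef al a i).[- n%:~R] = f.[(i - n)%:~R].
Proof.
by rewrite -hornerM xcoef_mul_ycoef /sigp horner_comp !hornerE rmorphB /= addrC.
Qed.

Lemma xcoef_ycoef_neq0 : [pchar K] =i pred0 -> forall i (n : int),
  i - n != 0 -> i - n + al%:Z != 0 ->
  (xcoef a i).[- n%:~R] != 0 /\ (ycoef al a i).[- n%:~R] != 0.
Proof.
move=> hK i n h1 h2; apply/andP; rewrite -negb_or -mulf_eq0.
rewrite horner_xcoef_ycoef /fpoly hornerM hornerD hornerX hornerC.
rewrite mulf_neq0 ?pchar0_intr_eq0 //.
by move: h2; rewrite -(pchar0_intr_eq0 hK) rmorphD.
Qed.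
End StructureConstants.

Section Surjections.
Variables (K : fieldType) (al : nat) (a : int -> {fraction {poly K}}) (n : int).
Hypotheses (hK : [pchar K] =i pred0) (hI : is_grsubQ al a).
Local Notation I := (Imod al a).
Local Notation r := (- n%:~R : K).
Local Notation m := (n - al%:Z).

Let xcoef_neq0 j : j - n != 0 -> j - n + al%:Z != 0 -> (xcoef a j).[r] != 0.
Proof. by move=> h1 h2; case: (xcoef_ycoef_neq0 hI hK h1 h2). Qed.

Let ycoef_neq0 j : j - n != 0 -> j - n + al%:Z != 0 -> (ycoef al a j).[r] != 0.
Proof. by move=> h1 h2; case: (xcoef_ycoef_neq0 hI hK h1 h2). Qed.

Lemma surj_Xmod_root : grsurj I (shift (Xmod K al) n) <-> root (ycoef al a m) r.
Proof.
split=> [[phi [hphi hsurj]]|/eqP root_m].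
  by apply/eqP; apply: (surj_line_top hphi hsurj) => /=; lia.
have [lam [lam_rec lam_neq0]] :=
  recurrence_solution_down (fun j => (ycoef al a j).[r]) m.
apply: (surj_line_of_weights (lam := lam)) => j /= hj.
- rewrite ifT; last by lia.
  by rewrite -lam_rec ?ycoef_neq0 -?(horner_xcoef_ycoef hI) //; [ring | lia..].
- case: ifP => hj1; first by rewrite mul1r lam_rec ?ycoef_neq0 //; lia.
  by rewrite (_ : j = m) ?root_m ?mulr0 //; lia.
- by apply: lam_neq0 => [|i hi]; [lia | apply: ycoef_neq0; lia].
Qed.

Lemma surj_Ymod_root : grsurj I (shift (Ymod K al) n) <-> root (xcoef a n) r.
Proof.
split=> [[phi [hphi hsurj]]|/eqP root_n].
  by apply/eqP; apply: (surj_line_bottom hphi hsurj) => /=; lia.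
have [lam [lam_rec lam_neq0]] :=
  recurrence_solution_up (fun j => (xcoef a j).[r]) (n + 1).
apply: (surj_line_of_weights (lam := lam)) => j /= hj.
- case: ifP => hj1; first by rewrite mul1r lam_rec ?xcoef_neq0 //; lia.
  by rewrite (_ : j = n) ?root_n ?mulr0 //; lia.
- rewrite ifT; last by lia.
  rewrite (_ : j + 1 - n - 1 = j - n); last by lia.
  by rewrite -lam_rec ?xcoef_neq0 -?(horner_xcoef_ycoef hI) //; [ring | lia..].
- by apply: lam_neq0 => [|i hi]; [lia | apply: xcoef_neq0; lia].
Qed.

Lemma surj_Zmod_root : (0 < al)%N ->
  grsurj I (shift (Zmod K al) n) <-> root (xcoef a m) r /\ root (ycoef al a n) r.
Proof.
move=> al_gt0; split=> [[phi [hphi hsurj]]|[/eqP root_m /eqP root_n]].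
  split; apply/eqP.
    by apply: (surj_line_bottom hphi hsurj) => /=; lia.
  by apply: (surj_line_top hphi hsurj) => /=; lia.
have [lam [lam_rec lam_neq0]] :=
  recurrence_solution_down (fun j => (ycoef al a j).[r]) n.
apply: (surj_line_of_weights (lam := lam)) => j /= hj.
- case: ifP => hj1; last by rewrite (_ : j = m) ?root_m ?mulr0 //; lia.
  by rewrite -lam_rec ?ycoef_neq0 -?(horner_xcoef_ycoef hI) //; [ring | lia..].
- case: ifP => hj1; first by rewrite mul1r lam_rec ?ycoef_neq0 //; lia.
  by rewrite (_ : j = n) ?root_n ?mulr0 //; lia.
- by apply: lam_neq0 => [|i hi]; [lia | apply: ycoef_neq0; lia].
Qed.

Lemma strcE i : strc a i = normp (xcoef a i).
Proof. by []. Qed.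

Let sigp_m_XaddC : sigp m ('X + al%:R%:P) = 'X - r%:P :> {poly K}.
Proof. by rewrite sigp_XaddC rmorphB /= subrK. Qed.

Lemma surj_Xmod_strc :
  grsurj I (shift (Xmod K al) n) <-> strc a m = 1 \/ strc a m = sigp m 'X.
Proof.
apply: iff_trans surj_Xmod_root _; rewrite strcE sigp_X.
apply: root_cofactor_XsubC2.
by rewrite (xcoef_mul_ycoef hI) sigp_fpoly sigp_m_XaddC sigp_X mulrC.
Qed.

Lemma surj_Ymod_strc : grsurj I (shift (Ymod K al) n) <->
  strc a n = sigp n 'X \/ strc a n = sigp n (fpoly K al).
Proof.
apply: iff_trans surj_Ymod_root _; rewrite strcE sigp_fpoly !sigp_X sigp_XaddC.
apply: (@root_factor_XsubC2 _ _ (ycoef al a n)).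
by rewrite (xcoef_mul_ycoef hI) sigp_fpoly sigp_X sigp_XaddC.
Qed.

Lemma surj_Zmod_strc : (0 < al)%N -> grsurj I (shift (Zmod K al) n) <->
  (strc a m = sigp m ('X + al%:R%:P) \/ strc a m = sigp m (fpoly K al))
  /\ (strc a n = 1 \/ strc a n = sigp n ('X + al%:R%:P)).
Proof.
move=> al_gt0; apply: iff_trans (surj_Zmod_root al_gt0) _.
have root_m := @root_factor_XsubC2 _ (xcoef a m) (ycoef al a m) r (- m%:~R).
have root_n := @root_cofactor_XsubC2 _ (xcoef a n) (ycoef al a n) r (- (n%:~R + al%:R)).
rewrite !strcE sigp_fpoly sigp_m_XaddC sigp_X sigp_XaddC mulrC.
rewrite (xcoef_mul_ycoef hI) sigp_fpoly sigp_m_XaddC sigp_X mulrC in root_m.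
rewrite (xcoef_mul_ycoef hI) sigp_fpoly sigp_X sigp_XaddC in root_n.
by split=> -[h1 h2]; split; [exact: (root_m erefl).1 | exact: (root_n erefl).1
  | exact: (root_m erefl).2 | exact: (root_n erefl).2].
Qed.

End Surjections.

Theorem lemma3p5 (K : closedFieldType) (hK : [pchar K] =i pred0) (al : nat)
    (a : int -> {fraction {poly K}}) (hI : is_grsubQ al a)
    (hfg : fingen (Imod al a)) (n : int) :
  let c := strc a in
  [/\ grsurj (Imod al a) (shift (Xmod K al) n) <->
        (c (n - al%:Z) = 1 \/ c (n - al%:Z) = sigp (n - al%:Z) 'X),
      grsurj (Imod al a) (shift (Ymod K al) n) <->
        (c n = sigp n 'X \/ c n = sigp n (fpoly K al))
    & (0 < al)%N ->
      (grsurj (Imod al a) (shift (Zmod K al) n) <->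
        ((c (n - al%:Z) = sigp (n - al%:Z) ('X + (al%:R)%:P)
          \/ c (n - al%:Z) = sigp (n - al%:Z) (fpoly K al))
         /\ (c n = 1 \/ c n = sigp n ('X + (al%:R)%:P))))].
Proof.
by split; [exact: surj_Xmod_strc | exact: surj_Ymod_strc | exact: surj_Zmod_strc].
Qed.
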